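(* Let $\mathcal{T}$ be a set of monomials, and let $\mathcal{L}=(n,\mathcal{M},\mathcal{C})$ be a simple linearization with $\mathcal{S}\cup\mathcal{T}\subseteq\mathcal{M}$ such that every node of $D(\mathcal{L})$ with in-degree $0$ belongs to $\mathcal{T}$. Let $m_1,m_2,m_3\in\mathcal{T}$ be pairwise different with $m_1\cap m_2\cap m_3\neq\emptyset$ such that $m_3\cap(m_1\cup m_2)$ is a proper superset of both $m_3\cap m_1$ and $m_3\cap m_2$. Then $G(D(\mathcal{L}))$ contains a cycle.
   Context: $[n]=\{1,\dots,n\}$; a monomial is a nonempty subset of $[n]$; $\mathcal{S}=\{\{i\}:i\in[n]\}$. A linearization is a triple $\mathcal{L}=(n,\mathcal{M},\mathcal{C})$, where $\mathcal{M}$ is a set of monomials with $\mathcal{S}\subseteq\mathcal{M}$ and $\mathcal{C}$ is a set of AND-constraints; each AND-constraint is a set $c\subseteq\mathcal{M}$ whose union $\bigcup c$ (resultant) lies in $\mathcal{M}$. $\mathcal{P}=\mathcal{M}\setminus\mathcal{S}$. Linearizations are consistent: each $m\in\mathcal{P}$ is the resultant of some $c$ with $|m'|<|m|$ for all $m'\in c$. $\mathcal{L}$ is simple if each proper monomial is the resultant of exactly one AND-constraint and $|\mathcal{C}|=|\mathcal{P}|$. $D(\mathcal{L})$ has node set $\mathcal{M}$ and, for each $c\in\mathcal{C}$, arcs from $\bigcup c$ to each $m\in c$; $G(D(\mathcal{L}))$ is its underlying undirected graph. *)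

(* The ground set [n] = {1,..,n} is modelled by 'I_n. *)
From mathcomp Require Import all_boot.
Set Implicit Arguments. Unset Strict Implicit. Unset Printing Implicit Defensive.

(* A monomial is a nonempty subset of [n]; sets of monomials are sets of sets. *)
Notation mono n := {set 'I_n}.

Definition singletons (n : nat) : {set mono n} := [set [set i] | i : 'I_n].

Definition resultant (n : nat) (c : {set mono n}) : mono n := \bigcup_(m in c) m.

Definition is_linearization (n : nat) (M : {set mono n}) (C : {set {set mono n}}) : Prop :=
  [/\ forall m, m \in M -> m != set0,
      singletons n \subset M &
      forall c, c \in C -> c \subset M /\ resultant c \in M].

Definition proper_monos (n : nat) (M : {set mono n}) : {set mono n} := M :\: singletons n.

Definition consistent (n : nat) (M : {set mono n}) (C : {set {set mono n}}) : Prop :=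
  forall m, m \in proper_monos M ->
    exists2 c, c \in C & resultant c = m /\ (forall m', m' \in c -> #|m'| < #|m|).

Definition simple (n : nat) (M : {set mono n}) (C : {set {set mono n}}) : Prop :=
  (forall m, m \in proper_monos M -> #|[set c in C | resultant c == m]| = 1)
  /\ #|C| = #|proper_monos M|.

Definition arc (n : nat) (C : {set {set mono n}}) (u v : mono n) : bool :=
  [exists c in C, (resultant c == u) && (v \in c)].

Definition indeg0 (n : nat) (M : {set mono n}) (C : {set {set mono n}}) (m : mono n) : Prop :=
  forall u, u \in M -> ~~ arc C u m.

Definition uedge (n : nat) (C : {set {set mono n}}) (u v : mono n) : bool :=
  arc C u v || arc C v u.

Definition has_cycle (n : nat) (M : {set mono n}) (C : {set {set mono n}}) : Prop :=
  exists s : seq (mono n),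
    [/\ all (fun m => m \in M) s, uniq s, 3 <= size s & cycle (uedge C) s].

(* Suppose G(D(L)) has no cycle.  Arcs lead from a monomial to proper subsets
   of it, and by consistency every monomial reaches each of its singletons.  In
   a forest two simple paths with the same ends coincide.  Hence the nodes on
   directed paths from a node w to a descendant t form a chain, and two nodes
   X, Z have at most one lowest common ancestor c (the walk X - c - Z is a
   simple path), which lies below every common ancestor of X and Z.
   Take x in m1 :&: m2 :&: m3, y in m3 :&: m2 but not in m1, and z in
   m3 :&: m1 but not in m2.  The lowest common ancestor c of {x} and {z} lies
   below m1, the one c' of {x} and {y} below m2, and both lie between m3 and
   {x}.  So either c' <= c <= m1 contains y, or c <= c' <= m2 contains z. *)
From Pilot Require Import Defs.
From mathcomp Require Import all_boot.
From Stdlib Require Classical_Prop.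
Set Implicit Arguments. Unset Strict Implicit. Unset Printing Implicit Defensive.

Definition acyclic (T : eqType) (e : rel T) :=
  forall s : seq T, uniq s -> 3 <= size s -> ~~ cycle e s.

Lemma last_rev_belast (T : Type) (x : T) p : last (last x p) (rev (belast x p)) = x.
Proof. by case: p => //= y p; rewrite rev_cons last_rcons. Qed.

Lemma path_connect_last (T : finType) (r : rel T) x p w :
  path r x p -> w \in x :: p -> connect r w (last x p).
Proof.
move=> xp wp; case/splitPl: wp xp => p1 p2 lw; rewrite cat_path last_cat lw.
by case/andP=> _ wp2; apply: (path_connect wp2); apply: mem_last.
Qed.

Lemma path_connect_total (T : finType) (r : rel T) x p a b :
  path r x p -> a \in x :: p -> b \in x :: p -> connect r a b || connect r b a.
Proof.
elim: p x => [|y p IHp] x.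
  by rewrite !mem_seq1 => _ /eqP-> /eqP->; rewrite connect0.
move=> xp; have [/= _ yp] := andP xp.
rewrite inE => /predU1P[-> bp|ap]; first by rewrite (path_connect xp bp).
rewrite inE => /predU1P[->|bp]; first by rewrite (path_connect xp) ?orbT // inE ap orbT.
exact: IHp yp ap bp.
Qed.

Section AcyclicGraph.
Variables (T : eqType) (e : rel T).
Hypotheses (e_sym : symmetric e) (e_acyclic : acyclic e).

Lemma path_rev x p : path e x p -> path e (last x p) (rev (belast x p)).
Proof. by rewrite rev_path; apply: sub_path => y z; rewrite e_sym. Qed.

Lemma acyclic_path_unique x p q : path e x p -> path e x q ->
  uniq (x :: p) -> uniq (x :: q) -> last x p = last x q -> p = q.
Proof.
elim: p q x => [|a p IHp] [|b q] x //=.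
- by move=> _ _ _ /andP[xq _] xl; rewrite xl mem_last in xq.
- by move=> _ _ /andP[xp _] _ xl; rewrite -xl mem_last in xp.
move=> /andP[xa ap] /andP[xb bq] /andP[xap up] /andP[xbq uq] lpq.
have [a_b|ab] := eqVneq a b; first by subst b; rewrite (IHp q a ap bq up uq lpq).
(* Shortening the walk a ~> last ~> b to a simple path closes a cycle through x. *)
have walk : path e a (p ++ rev (belast b q)) by rewrite cat_path ap lpq; apply: path_rev.
have : last a (p ++ rev (belast b q)) = b by rewrite last_cat lpq last_rev_belast.
case: (shortenP walk) => r ar ur r_walk last_r.
have x_r : x \notin r.
  apply/negP => /r_walk; rewrite mem_cat mem_rev => /orP[xp|/mem_belast xq].
    by rewrite inE xp orbT in xap.
  by rewrite xq in xbq.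
have size_r : 3 <= size (x :: a :: r).
  by case: r last_r {ar ur r_walk x_r} => //= a_b; rewrite a_b eqxx in ab.
have uniq_cycle : uniq (x :: a :: r).
  rewrite cons_uniq ur andbT inE negb_or x_r andbT.
  by apply: contraNneq xap => ->; apply: mem_head.
by have := e_acyclic uniq_cycle size_r; rewrite /= rcons_path xa ar last_r e_sym xb.
Qed.

End AcyclicGraph.

Section GradedForest.
Variables (T : finType) (down e : rel T) (rank : T -> nat).
Hypothesis down_rank : forall u v, down u v -> rank v < rank u.
Hypotheses (down_edge : subrel down e) (e_sym : symmetric e) (e_acyclic : acyclic e).

Local Notation reach := (connect down).

Lemma down_path_uniq x p : path down x p -> uniq (x :: p).
Proof.
move=> xp; apply: (sorted_uniq (leT := fun u v => rank v < rank u)).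
- by move=> v u w uv vw; apply: ltn_trans uv.
- by move=> u; rewrite /= ltnn.
- by apply: sub_path xp => u v /down_rank.
Qed.

Lemma reach_antisym u v : reach u v -> reach v u -> u = v.
Proof.
move=> /connectP[p up ->] /connectP[q vq]; rewrite -last_cat => u_last.
have : uniq (u :: p ++ q) by apply: down_path_uniq; rewrite cat_path up.
case: p {up vq} u_last => [|a p] //= u_last /andP[u_pq _].
by rewrite u_last mem_last in u_pq.
Qed.

Lemma reach_comparable w a b t :
  reach w a -> reach a t -> reach w b -> reach b t -> reach a b || reach b a.
Proof.
move=> /connectP[p wp ->] /connectP[p' ap' ->] /connectP[q wq ->] /connectP[q' bq' t_q].
have wpp' : path down w (p ++ p') by rewrite cat_path wp.
have wqq' : path down w (q ++ q') by rewrite cat_path wq.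
have pq : p ++ p' = q ++ q'.
  apply: (acyclic_path_unique e_sym e_acyclic (sub_path down_edge wpp') (sub_path down_edge wqq'));
    by rewrite ?down_path_uniq // !last_cat.
apply: (path_connect_total wpp'); first by rewrite -cat_cons mem_cat mem_last.
by rewrite pq -cat_cons mem_cat mem_last.
Qed.

Definition lca (X Z c : T) : Prop :=
  [/\ reach c X, reach c Z & forall a, down c a -> ~~ (reach a X && reach a Z)].

Lemma exists_lca u X Z : reach u X -> reach u Z -> exists2 c, reach u c & lca X Z c.
Proof.
have [k u_k] := ubnP (rank u); elim: k u u_k => [//|k IHk] u u_k uX uZ.
have [a /andP[ua /andP[aX aZ]]|no_child] :=
  pickP (fun a => down u a && (reach a X && reach a Z)).
  have [|c ac lc] := IHk a _ aX aZ; first by apply: leq_trans (down_rank ua) _.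
  by exists c => //; apply: connect_trans (connect1 ua) ac.
exists u => //; split=> // a ua; apply/negP => common.
by have := no_child a; rewrite /= ua common.
Qed.

Lemma lca_walk X Z c : lca X Z c -> exists s,
  [/\ path e X s, uniq (X :: s), last X s = Z, c \in X :: s & {in X :: s, forall w, reach c w}].
Proof.
case=> /connectP[p cp ->] /connectP[q cq ->] lowest.
exists (rev (belast c p) ++ q).
have walkE : last c p :: rev (belast c p) ++ q = rev (c :: p) ++ q.
  by rewrite [c :: p]lastI rev_rcons.
have disjoint_pq : ~~ has (mem (rev (c :: p))) q.
  have /andP[c_q _] := down_path_uniq cq.
  apply/hasPn => w wq; rewrite /= mem_rev inE negb_or; apply/andP; split.
    by apply: contraNneq c_q => <-.
  case: p cp lowest {walkE} => // a p /andP[ca ap] lowest; apply/negP => wp.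
  have aw : reach a w := path_connect ap wp.
  have wX := path_connect_last ap wp.
  have wZ : reach w (last c q) by apply: (path_connect_last cq); rewrite inE wq orbT.
  by have := lowest a ca; rewrite (connect_trans aw wX) (connect_trans aw wZ).
rewrite walkE; split.
- rewrite cat_path last_rev_belast (sub_path down_edge cq) andbT.
  exact: (path_rev e_sym (sub_path down_edge cp)).
- rewrite cat_uniq rev_uniq down_path_uniq // disjoint_pq /=.
  by have /andP[] := down_path_uniq cq.
- by rewrite last_cat last_rev_belast.
- by rewrite mem_cat mem_rev mem_head.
- move=> w; rewrite mem_cat mem_rev => /orP[wp|wq]; first exact: (path_connect cp wp).
  by apply: (path_connect cq); rewrite inE wq orbT.
Qed.

Lemma lca_unique X Z c d : lca X Z c -> lca X Z d -> c = d.
Proof.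
suff lca_below c' d' : lca X Z c' -> lca X Z d' -> reach d' c'.
  by move=> lc ld; apply: reach_antisym; [apply: lca_below ld lc | apply: lca_below lc ld].
move=> /lca_walk[s [Xs uXs sZ c's _]] /lca_walk[t [Xt uXt tZ _ below_d']].
have st : s = t := acyclic_path_unique e_sym e_acyclic Xs Xt uXs uXt (etrans sZ (esym tZ)).
by apply: below_d'; rewrite -st.
Qed.

Lemma reach_lca w X Z c : reach w X -> reach w Z -> lca X Z c -> reach w c.
Proof.
by move=> wX wZ lc; have [d wd ld] := exists_lca wX wZ; rewrite (lca_unique lc ld).
Qed.

End GradedForest.

Section Linearization.
Variables (n : nat) (M : {set mono n}) (C : {set {set mono n}}).

Definition strict_arc (u v : mono n) := Defs.arc C u v && (v != u).

Local Notation reach := (connect strict_arc).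

Lemma strict_arc_proper u v : strict_arc u v -> v \proper u.
Proof.
case/andP=> /existsP[c /andP[_ /andP[/eqP Rc vc]]] vu.
by rewrite properEneq vu -Rc; apply: (bigcup_sup _ vc).
Qed.

Lemma strict_arc_card u v : strict_arc u v -> #|v| < #|u|.
Proof. by move/strict_arc_proper/proper_card. Qed.

Lemma strict_arc_uedge : subrel strict_arc (uedge C).
Proof. by move=> u v /andP[uv _]; rewrite /uedge uv. Qed.

Lemma uedge_sym : symmetric (uedge C).
Proof. by move=> u v; rewrite /uedge orbC. Qed.

Lemma reach_subset u v : reach u v -> v \subset u.
Proof.
case/connectP=> p + ->; elim: p u => [|a p IHp] u //= /andP[ua ap].
exact: subset_trans (IHp a ap) (proper_sub (strict_arc_proper ua)).
Qed.

Lemma reach_set1_mem u x : reach u [set x] -> x \in u.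
Proof. by rewrite -sub1set; apply: reach_subset. Qed.

Hypothesis lin : is_linearization M C.

Lemma uedge_mem u v : uedge C u v -> u \in M.
Proof.
have [_ _ CM] := lin.
case/orP=> /existsP[c /andP[cC /andP[/eqP Rc vc]]]; have [/subsetP cM RM] := CM c cC.
  by rewrite -Rc.
exact: cM.
Qed.

Lemma acyclic_uedge : ~ has_cycle M C -> acyclic (uedge C).
Proof.
move=> no_cycle s us s3; apply/negP => cs; apply: no_cycle; exists s; split=> //.
by apply/allP => w ws; apply: (uedge_mem (next_cycle cs ws)).
Qed.

Hypothesis cons : consistent M C.

Lemma reach_singleton m x : m \in M -> x \in m -> reach m [set x].
Proof.
have [_ _ CM] := lin.
have [k m_k] := ubnP #|m|; elim: k m m_k => [//|k IHk] m m_k mM xm.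
have [/imsetP[i _ m_i]|m_nsingle] := boolP (m \in singletons n).
  by move: xm; rewrite m_i in_set1 => /eqP->.
have mP : m \in proper_monos M by rewrite in_setD m_nsingle mM.
have [c cC [Rc c_lt]] := cons mP.
move: xm; rewrite -{1}Rc => /bigcupP[v vc xv].
have [/subsetP cM _] := CM c cC.
have mv : strict_arc m v.
  apply/andP; split; first by apply/existsP; exists c; rewrite cC Rc eqxx vc.
  by apply: contraTneq (c_lt v vc) => ->; rewrite ltnn.
apply: connect_trans (connect1 mv) (IHk v _ (cM v vc) xv).
by apply: leq_trans (c_lt v vc) _; rewrite -ltnS.
Qed.

End Linearization.

Theorem lemma4p4 (n : nat) (T M : {set {set 'I_n}}) (C : {set {set {set 'I_n}}})
    (m1 m2 m3 : {set 'I_n}) :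
  (forall m, m \in T -> m != set0) ->
  is_linearization M C -> consistent M C -> simple M C ->
  singletons n :|: T \subset M ->
  (forall m, m \in M -> indeg0 M C m -> m \in T) ->
  m1 \in T -> m2 \in T -> m3 \in T ->
  m1 != m2 -> m1 != m3 -> m2 != m3 ->
  m1 :&: m2 :&: m3 != set0 ->
  m3 :&: m1 \proper m3 :&: (m1 :|: m2) ->
  m3 :&: m2 \proper m3 :&: (m1 :|: m2) ->
  has_cycle M C.
Proof.
move=> _ lin cons _ TM _ m1T m2T m3T _ _ _.
move=> /set0Pn[x x123] /properP[_ [y y_in y_out]] /properP[_ [z z_in z_out]].
move: x123 y_in y_out z_in z_out; rewrite !inE => /andP[/andP[xm1 xm2] xm3].
move=> /andP[ym3 ym12]; rewrite ym3 /= => ym1 /andP[zm3 zm12]; rewrite zm3 /= => zm2.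
have ym2 : y \in m2 by rewrite (negbTE ym1) in ym12.
have zm1 : z \in m1 by rewrite (negbTE zm2) orbF in zm12.
apply: Classical_Prop.NNPP => /(acyclic_uedge lin) acyc.
have card := @strict_arc_card n C; have edge := @strict_arc_uedge n C.
have reach_pt m t : m \in T -> t \in m -> connect (strict_arc C) m [set t].
  by move=> mT tm; apply: (reach_singleton lin cons _ tm); apply: (subsetP TM); rewrite inE mT orbT.
have [c m3c lca_c] := exists_lca card (reach_pt m3 x m3T xm3) (reach_pt m3 z m3T zm3).
have [c' m3c' lca_c'] := exists_lca card (reach_pt m3 x m3T xm3) (reach_pt m3 y m3T ym3).
have lca_below := reach_lca card edge (@uedge_sym n C) acyc.
have c_m1 : c \subset m1.
  exact/reach_subset/(lca_below _ _ _ _ (reach_pt m1 x m1T xm1) (reach_pt m1 z m1T zm1) lca_c).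
have c'_m2 : c' \subset m2.
  exact/reach_subset/(lca_below _ _ _ _ (reach_pt m2 x m2T xm2) (reach_pt m2 y m2T ym2) lca_c').
have [cx cz _] := lca_c; have [c'x c'y _] := lca_c'.
case/orP: (reach_comparable card edge (@uedge_sym n C) acyc m3c cx m3c' c'x) => /reach_subset.
- move=> c'_c; have := subsetP (subset_trans c'_c c_m1) y (reach_set1_mem c'y).
  by rewrite (negbTE ym1).
- move=> c_c'; have := subsetP (subset_trans c_c' c'_m2) z (reach_set1_mem cz).
  by rewrite (negbTE zm2).
Qed.
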